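(* Let $Q$ be a quiver of rank $3$ with no frozen vertices which is mutation-abundant, and let $\mathbf M=m_1m_2\cdots$ be an infinite reduced mutation sequence. Then exactly one of the following holds: (1) $Q^{(i)}_{\mathbf M}$ is acyclic for all sufficiently large $i$ (and then every sufficiently late mutation $m_i$ is at a source or sink of $Q^{(i-1)}_{\mathbf M}$); or (2) $Q^{(i)}_{\mathbf M}$ is an oriented 3-cycle for all sufficiently large $i$. In either case there is $i_0$ such that $m_i$ is cycle-preserving for $Q^{(i-1)}_{\mathbf M}$ for all $i>i_0$.
   Context: A quiver is a finite directed multigraph with no loops and no oriented 2-cycles; here all vertices are mutable. $Q|_S$ is the induced subquiver on $S$. Mutation $\mu_j$: for each path $i\to j\to k$ with $a$ arrows $i\to j$ and $b$ arrows $j\to k$ add $ab$ arrows $i\to k$, reverse all arrows at $j$, cancel 2-cycles. A mutation sequence $\mathbf M=m_1m_2\cdots$ has $Q^{(0)}_{\mathbf M}=Q$, $Q^{(i)}_{\mathbf M}=\mu_{m_i}(Q^{(i-1)}_{\mathbf M})$; reduced means $m_i\ne m_{i+1}$. A quiver without frozen vertices is mutation-abundant if every quiver mutation-equivalent to it has at least 2 arrows between every pair of vertices. A 3-vertex quiver is an oriented 3-cycle if its underlying directed graph is not acyclic. A vertex $j$ is cycle-preserving for $Q$ if whenever $Q|_{\{i,j,k\}}$ is an oriented 3-cycle containing $j$, so is $\mu_j(Q)|_{\{i,j,k\}}$. *)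

From mathcomp Require Import all_boot.
Set Implicit Arguments. Unset Strict Implicit. Unset Printing Implicit Defensive.

(* A quiver on the vertex set 'I_n (all vertices mutable), given by its
   arrow counts: Q i j = number of arrows i -> j. *)
Definition quiver (n : nat) := 'I_n -> 'I_n -> nat.

Definition wf_quiver n (Q : quiver n) : Prop :=
  (forall i, Q i i = 0) /\ (forall i j, Q i j = 0 \/ Q j i = 0).

(* Quiver mutation at j: arrows at j are reversed; for i,k <> j we add
   Q i j * Q j k arrows i -> k (paths i -> j -> k) and then cancel 2-cycles. *)
Definition mutate n (j : 'I_n) (Q : quiver n) : quiver n :=
  fun a b =>
    if (a == j) || (b == j) then Q b a
    else (Q a b + Q a j * Q j b) - (Q b a + Q b j * Q j a).

Definition mutate_seq n (Q : quiver n) (s : seq 'I_n) : quiver n :=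
  foldl (fun Q' j => mutate j Q') Q s.

(* Q^{(i)}_M for an infinite sequence M, where m_{i+1} = M i *)
Fixpoint mseq n (Q : quiver n) (M : nat -> 'I_n) (i : nat) : quiver n :=
  match i with
  | 0 => Q
  | i'.+1 => mutate (M i') (mseq Q M i')
  end.

Definition reduced n (M : nat -> 'I_n) : Prop := forall i, M i != M i.+1.

Definition mutation_abundant n (Q : quiver n) : Prop :=
  forall (s : seq 'I_n) (i j : 'I_n), i != j ->
    2 <= mutate_seq Q s i j + mutate_seq Q s j i.

Definition arrow_rel_on n (Q : quiver n) (S : {set 'I_n}) : rel 'I_n :=
  fun a b => [&& a \in S, b \in S & 0 < Q a b].

Definition acyclic_on n (Q : quiver n) (S : {set 'I_n}) : Prop :=
  forall a b, arrow_rel_on Q S a b -> ~~ connect (arrow_rel_on Q S) b a.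

Definition acyclic n (Q : quiver n) : Prop := acyclic_on Q setT.

Definition oriented_3cycle_on n (Q : quiver n) (i j k : 'I_n) : Prop :=
  [/\ i != j, j != k, i != k & ~ acyclic_on Q [set i; j; k]].

Definition cycle_preserving n (Q : quiver n) (j : 'I_n) : Prop :=
  forall i k, oriented_3cycle_on Q i j k -> oriented_3cycle_on (mutate j Q) i j k.

Definition is_source n (Q : quiver n) (j : 'I_n) : Prop := forall i, Q i j = 0.
Definition is_sink n (Q : quiver n) (j : 'I_n) : Prop := forall k, Q j k = 0.

From mathcomp Require Import all_boot.
From mathcomp Require Import zify.
From Stdlib Require Import Classical.
Set Implicit Arguments. Unset Strict Implicit. Unset Printing Implicit Defensive.

(* Abundance makes every quiver of the sequence a tournament with at least two
   arrows on each edge, and such a quiver is acyclic iff it has no oriented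
   3-cycle.  Call a 3-cycle through the last mutated vertex u growing when the
   arrow opposite u is the heaviest.  Mutating at another vertex v replaces the
   arrow opposite v, of weight r, by p q - r, which exceeds both p and q, so the
   growing property is inherited and the quiver stays cyclic forever.  If no
   growing cycle ever appears, a mutation of a cyclic quiver either makes it
   acyclic or keeps it cyclic with all three weights below the old opposite
   weight, so the sequence reaches an acyclic quiver; from then on a mutation
   away from a source or sink would create a growing cycle, hence every
   mutation is at a source or sink and the quiver stays acyclic.  Cycle
   preservation is vacuous while Q is acyclic and automatic once the next
   quiver is cyclic, since a 3-vertex subset is the whole quiver. *)

Definition cycle3 n (Q : quiver n) a b c := [/\ 0 < Q a b, 0 < Q b c & 0 < Q c a].

Definition abundant n (Q : quiver n) := forall x y, x != y -> 2 <= Q x y + Q y x.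

Definition tournament n (Q : quiver n) := forall x y, x != y -> 0 < Q x y + Q y x.

Definition growing_at (Q : quiver 3) u :=
  exists a c, [/\ cycle3 Q a u c, Q a u <= Q c a & Q u c <= Q c a].

Lemma ord3_cases (x y z v : 'I_3) :
  x != y -> y != z -> x != z -> [\/ v = x, v = y | v = z].
Proof.
case: x y z v => [x Hx] [y Hy] [z Hz] [v Hv].
rewrite -!val_eqE /= => /eqP xy /eqP yz /eqP xz.
have : v = x \/ v = y \/ v = z by lia.
by case=> [E|[E|E]]; subst; [apply: Or31 | apply: Or32 | apply: Or33]; apply: val_inj.
Qed.

Lemma set3_ord3 (i j k : 'I_3) : i != j -> j != k -> i != k -> [set i; j; k] = setT.
Proof.
move=> ij jk ik; apply/setP => x; rewrite !inE.
by case: (ord3_cases x ij jk ik) => ->; rewrite eqxx ?orbT.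
Qed.

Lemma connect_rank (T : finType) (e : rel T) (f : T -> nat) x y :
  {homo f : u v / e u v >-> u < v} -> connect e x y -> f x <= f y.
Proof.
move=> fe /connectP [p ep ->]; elim: p x ep => //= z p IH x /andP [exz ep].
exact: leq_trans (ltnW (fe _ _ exz)) (IH _ ep).
Qed.

Lemma not_eventually_both (P R : nat -> Prop) N :
  (forall k, N <= k -> P k) -> (forall k, P k -> ~ R k) ->
  ~ exists N', forall k, N' <= k -> R k.
Proof.
move=> HP PR [N' HR]; apply: (PR (maxn N N')); [apply: HP | apply: HR]; lia.
Qed.

Section Mutation.
Variables (n : nat) (Q : quiver n).

Lemma mutate_jx j x : mutate j Q j x = Q x j.
Proof. by rewrite /mutate eqxx. Qed.

Lemma mutate_xj j x : mutate j Q x j = Q j x.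
Proof. by rewrite /mutate eqxx orbT. Qed.

Lemma mutate_off j x y : x != j -> y != j ->
  mutate j Q x y = (Q x y + Q x j * Q j y) - (Q y x + Q y j * Q j x).
Proof. by move=> xj yj; rewrite /mutate (negbTE xj) (negbTE yj). Qed.

Lemma wf_mutate j : wf_quiver Q -> wf_quiver (mutate j Q).
Proof.
case=> Q0 Q2; split.
- by move=> i; rewrite /mutate; case: ifP => _; [exact: Q0 | rewrite subnn].
- move=> a b; rewrite /mutate orbC; case: ifP => _.
    by case: (Q2 a b) => ->; [right | left].
  set u := _ + _; set v := _ + _.
  by case: (leqP u v) => uv; [left | right]; apply/eqP; rewrite subn_eq0 // ltnW.
Qed.

Hypothesis wfQ : wf_quiver Q.

Lemma cycle3_distinct a b c : cycle3 Q a b c -> [/\ a != b, b != c & a != c].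
Proof.
case: wfQ => Q0 _ [ab bc ca]; split; apply/eqP => E; subst.
- by rewrite Q0 in ab.
- by rewrite Q0 in bc.
- by rewrite Q0 in ca.
Qed.

Lemma cycle3_rot a b c : cycle3 Q a b c -> cycle3 Q b c a.
Proof. by case. Qed.

Lemma cycle3_not_acyclic a b c : cycle3 Q a b c -> ~ acyclic Q.
Proof.
case=> ab bc ca Ac.
have arrow x y : 0 < Q x y -> arrow_rel_on Q setT x y by rewrite /arrow_rel_on !inE.
apply/negP: (Ac a b (arrow _ _ ab)); rewrite negbK.
by apply: (connect_trans (y := c)); apply: connect1; apply: arrow.
Qed.

Lemma abundant_arrow x y : abundant Q -> 0 < Q x y -> 2 <= Q x y.
Proof.
case: wfQ => Q0 Q2 A xy0.
have xy : x != y by apply/eqP => E; subst; rewrite Q0 in xy0.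
by have := A _ _ xy; case: (Q2 x y) => E; rewrite E // in xy0 *; rewrite addn0.
Qed.

(* A tournament without 3-cycles is transitive: along an arrow x -> y the set
   of in-neighbours strictly grows, so its size ranks the vertices. *)
Lemma acyclic_no_cycle3 : tournament Q ->
  (forall a b c, ~ cycle3 Q a b c) -> acyclic Q.
Proof.
case: wfQ => Q0 Q2 tourn no3.
pose indeg x := #|[set y | 0 < Q y x]|.
have rank x y : arrow_rel_on Q setT x y -> indeg x < indeg y.
  rewrite /arrow_rel_on !inE /= => xy; apply: proper_card; apply/properP; split.
  - apply/subsetP => z; rewrite !inE => zx.
    have zy : z != y.
      by apply/eqP => E; subst z; case: (Q2 x y) => E; rewrite E in xy zx.
    have := tourn _ _ zy; case: (Q2 z y) => ->; rewrite ?addn0 // add0n => yz.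
    by case: (no3 x y z).
  - by exists x; rewrite !inE ?xy // Q0.
move=> a b ab; apply/negP => /(connect_rank rank).
by have := rank _ _ ab; lia.
Qed.

Lemma acyclic_or_cycle3 : tournament Q ->
  acyclic Q \/ exists a b c, cycle3 Q a b c.
Proof.
move=> tourn; case: (classic (exists a b c, cycle3 Q a b c)) => [|no3]; first by right.
by left; apply: acyclic_no_cycle3 => // a b c C; apply: no3; exists a, b, c.
Qed.

End Mutation.

Lemma abundant_tournament n (Q : quiver n) : abundant Q -> tournament Q.
Proof. by move=> A x y xy; apply: leq_trans (A x y xy). Qed.

Lemma cycle3_in_out (Q : quiver 3) a b c v : wf_quiver Q -> cycle3 Q a b c ->
  (exists w, 0 < Q v w) /\ (exists w, 0 < Q w v).
Proof.
move=> wfQ C; have [ab bc ac] := cycle3_distinct wfQ C; case: C => h1 h2 h3.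
by case: (ord3_cases v ab bc ac) => ->; split; eexists; eassumption.
Qed.

Lemma cycle3_through (Q : quiver 3) a b c j N : wf_quiver Q -> cycle3 Q a b c ->
  Q a b < N -> Q b c < N -> Q c a < N ->
  exists a' c', [/\ cycle3 Q a' j c', Q a' j < N, Q j c' < N & Q c' a' < N].
Proof.
move=> wfQ C h1 h2 h3; have [ab bc ac] := cycle3_distinct wfQ C.
case: (ord3_cases j ab bc ac) => ->.
- by exists c, b; split => //; do 2 apply: cycle3_rot.
- by exists a, c.
- by exists b, a; split => //; apply: cycle3_rot.
Qed.

Section Rank3.
Variable Q : quiver 3.
Hypothesis wfQ : wf_quiver Q.

Lemma mutate_source_sink_acyclic j : abundant (mutate j Q) ->
  is_source Q j \/ is_sink Q j -> acyclic (mutate j Q).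
Proof.
move=> A S; apply: acyclic_no_cycle3; [exact: wf_mutate | exact: abundant_tournament |].
move=> a b c C; have [[w1 h1] [w2 h2]] := cycle3_in_out j (wf_mutate j wfQ) C.
by case: S => S; [rewrite mutate_jx S in h1 | rewrite mutate_xj S in h2].
Qed.

Lemma mutate_cycle3_opposite a j c : cycle3 Q a j c ->
  mutate j Q a c = Q a j * Q j c - Q c a /\ mutate j Q c a = Q c a - Q a j * Q j c.
Proof.
move=> C; have [aj jc ac] := cycle3_distinct wfQ C.
case: wfQ C => _ Q2 [h1 h2 h3].
have ac0 : Q a c = 0 by case: (Q2 a c) => // E; rewrite E in h3.
have cj0 : Q c j = 0 by case: (Q2 c j) => // E; rewrite E in h2.
have ja0 : Q j a = 0 by case: (Q2 j a) => // E; rewrite E in h1.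
by rewrite !mutate_off ?(eq_sym c) // ac0 cj0 ja0; split; lia.
Qed.

Lemma mutate_cycle3_grow a j c : cycle3 Q a j c -> Q c a < Q a j * Q j c ->
  cycle3 (mutate j Q) c j a.
Proof.
move=> C big; have [Eac _] := mutate_cycle3_opposite C.
by case: C => h1 h2 h3; split; rewrite ?mutate_jx ?mutate_xj ?Eac // subn_gt0.
Qed.

Lemma growing_at_mutate u v : abundant Q -> growing_at Q u -> v != u ->
  growing_at (mutate v Q) v.
Proof.
move=> A [a [c [C au ac]]] vu.
have [d1 d2 d3] := cycle3_distinct wfQ C; have [h1 h2 h3] := C.
have := abundant_arrow wfQ A h1; have := abundant_arrow wfQ A h2.
have := abundant_arrow wfQ A h3 => p2 q2 r2.
case: (ord3_cases v d1 d2 d3) => E; subst v; last 2 first.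
- by rewrite eqxx in vu.
- have C' : cycle3 Q u c a by apply: cycle3_rot.
  have [E2 _] := mutate_cycle3_opposite C'.
  exists a, u; split; rewrite ?mutate_jx ?mutate_xj ?E2; try nia.
  by apply: mutate_cycle3_grow; rewrite //; nia.
- have C' : cycle3 Q c a u by do 2 apply: cycle3_rot.
  have [E2 _] := mutate_cycle3_opposite C'.
  exists u, c; split; rewrite ?mutate_jx ?mutate_xj ?E2; try nia.
  by apply: mutate_cycle3_grow; rewrite //; nia.
Qed.

(* With p, q the weights at j and r the opposite weight, the new opposite
   weight is p q - r; when it is not the heaviest, p, q >= 2 forces all three
   new weights below r. *)
Lemma mutate_cycle3 a j c : abundant Q -> abundant (mutate j Q) -> cycle3 Q a j c ->
  [\/ growing_at (mutate j Q) j, acyclic (mutate j Q) |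
   [/\ cycle3 (mutate j Q) c j a, mutate j Q c j < Q c a,
       mutate j Q j a < Q c a & mutate j Q a c < Q c a]].
Proof.
move=> A A' C; have [aj jc ac] := cycle3_distinct wfQ C; have [h1 h2 h3] := C.
have := abundant_arrow wfQ A h1; have := abundant_arrow wfQ A h2.
have := abundant_arrow wfQ A h3 => p2 q2 r2.
have [Eac Eca] := mutate_cycle3_opposite C.
case: (ltngtP (Q a j * Q j c) (Q c a)) => cmp.
- apply: Or32; apply: acyclic_no_cycle3 (abundant_tournament A') _.
    exact: wf_mutate.
  move=> x y z C'; have [_ [w hw]] := cycle3_in_out c (wf_mutate j wfQ) C'.
  case: (ord3_cases w aj jc ac) => E; subst w.
  + by rewrite Eac in hw; lia.
  + rewrite mutate_jx in hw; case: wfQ => _ Q2.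
    by case: (Q2 c j) => E; rewrite E in hw h2.
  + by case: (wf_mutate j wfQ) => Q0 _; rewrite Q0 in hw.
- have C2 := mutate_cycle3_grow C cmp.
  rewrite mutate_jx mutate_xj Eac.
  case: (leqP (Q a j) (Q a j * Q j c - Q c a)) => l1;
  case: (leqP (Q j c) (Q a j * Q j c - Q c a)) => l2; last 3 first.
  + by apply: Or33; split => //; nia.
  + by apply: Or33; split => //; nia.
  + by apply: Or33; split => //; nia.
  by apply: Or31; exists c, a; rewrite mutate_jx mutate_xj Eac.
- by have := A' _ _ ac; rewrite Eac Eca cmp subnn.
Qed.

Lemma mutate_acyclic j : acyclic Q ->
  [\/ is_source Q j, is_sink Q j | growing_at (mutate j Q) j].
Proof.
move=> Ac; case: wfQ => Q0 Q2.
have [/existsP [a ha] | noin] := boolP [exists a, 0 < Q a j]; last first.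
  apply: Or31 => w; move: noin; rewrite negb_exists => /forallP /(_ w).
  by rewrite lt0n negbK => /eqP.
have [/existsP [c hc] | noout] := boolP [exists c, 0 < Q j c]; last first.
  apply: Or32 => w; move: noout; rewrite negb_exists => /forallP /(_ w).
  by rewrite lt0n negbK => /eqP.
apply: Or33.
have aj : a != j by apply/eqP => E; subst; rewrite Q0 in ha.
have jc : j != c by apply/eqP => E; subst; rewrite Q0 in hc.
have ac : a != c.
  by apply/eqP => E; subst; case: (Q2 c j) => E; rewrite E in ha hc.
have ca0 : Q c a = 0.
  by case: (posnP (Q c a)) => // ca; case: (cycle3_not_acyclic (And3 ha hc ca)).
have cj0 : Q c j = 0 by case: (Q2 c j) => // E; rewrite E in hc.
have ja0 : Q j a = 0 by case: (Q2 j a) => // E; rewrite E in ha.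
have Eac : mutate j Q a c = Q a c + Q a j * Q j c.
  by rewrite mutate_off ?(eq_sym c) // ca0 cj0; lia.
exists c, a; rewrite mutate_jx mutate_xj Eac; split; try nia.
by split; rewrite ?mutate_jx ?mutate_xj ?Eac //; nia.
Qed.

Lemma cycle_preserving_rank3 j : acyclic Q \/ ~ acyclic (mutate j Q) ->
  cycle_preserving Q j.
Proof.
move=> H x z [xj jz xz]; rewrite set3_ord3 // => NA.
by split => //; rewrite set3_ord3 //; case: H.
Qed.

End Rank3.

Lemma mseq_mutate_seq n (Q : quiver n) (M : nat -> 'I_n) i :
  mseq Q M i = mutate_seq Q (mkseq M i).
Proof.
elim: i => // i IH.
by rewrite mkseqS /mutate_seq foldl_rcons -/(mutate_seq Q _) -IH.
Qed.

Section MutationSequence.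
Variables (Q : quiver 3) (M : nat -> 'I_3).
Hypotheses (wfQ : wf_quiver Q) (abQ : mutation_abundant Q) (redM : reduced M).

Lemma wf_mseq i : wf_quiver (mseq Q M i).
Proof. by elim: i => //= i IH; apply: wf_mutate. Qed.

Lemma abundant_mseq i : abundant (mseq Q M i).
Proof. by move=> x y; rewrite mseq_mutate_seq; apply: abQ. Qed.

Lemma growing_persists i d : growing_at (mseq Q M i.+1) (M i) ->
  growing_at (mseq Q M (i + d).+1) (M (i + d)).
Proof.
move=> G; elim: d => [|d IH]; first by rewrite addn0.
rewrite addnS; apply: (growing_at_mutate (wf_mseq _) (abundant_mseq _) IH).
by rewrite eq_sym.
Qed.

Lemma growing_forever i : growing_at (mseq Q M i.+1) (M i) ->
  forall k, i < k -> ~ acyclic (mseq Q M k).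
Proof.
move=> G k ik; have := growing_persists (k - i.+1) G.
rewrite (_ : (i + (k - i.+1)).+1 = k); last by lia.
by case=> a [c [C _ _]]; apply: cycle3_not_acyclic C.
Qed.

Section NeverGrowing.
Hypothesis never_growing : forall i, ~ growing_at (mseq Q M i.+1) (M i).

(* Descent on a strict upper bound for the three weights of the current cycle. *)
Lemma cycle3_reaches_acyclic N i a b c : cycle3 (mseq Q M i) a b c ->
  mseq Q M i a b < N -> mseq Q M i b c < N -> mseq Q M i c a < N ->
  exists k, acyclic (mseq Q M k).
Proof.
elim: N i a b c => // N IH i a b c C h1 h2 h3.
have [a' [c' [C' l1 l2 l3]]] := cycle3_through (M i) (wf_mseq i) C h1 h2 h3.
have [G|Ac|[C2 m1 m2 m3]] :=
  mutate_cycle3 (wf_mseq i) (abundant_mseq i) (abundant_mseq i.+1) C'.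
- by case: (never_growing G).
- by exists i.+1.
- by apply: (IH i.+1 c' (M i) a' C2); rewrite /=; lia.
Qed.

Lemma eventually_acyclic : exists k, acyclic (mseq Q M k).
Proof.
have [Ac|[a [b [c C]]]] := acyclic_or_cycle3 (wf_mseq 0)
  (abundant_tournament (abundant_mseq 0)); first by exists 0.
by apply: (cycle3_reaches_acyclic (N := (Q a b + Q b c + Q c a).+1) C) => /=; lia.
Qed.

Lemma acyclic_mutate_source_sink i : acyclic (mseq Q M i) ->
  is_source (mseq Q M i) (M i) \/ is_sink (mseq Q M i) (M i).
Proof.
move=> Ac; have [S|S|G] := @mutate_acyclic _ (wf_mseq i) (M i) Ac; [by left|by right|].
by case: (never_growing G).
Qed.

Lemma acyclic_forever k : acyclic (mseq Q M k) ->
  forall l, k <= l -> acyclic (mseq Q M l).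
Proof.
move=> Ack l /subnKC <-; elim: (l - k) => [|d IH]; first by rewrite addn0.
rewrite addnS.
apply: (mutate_source_sink_acyclic (wf_mseq _) (abundant_mseq (k + d).+1)).
exact: acyclic_mutate_source_sink.
Qed.

End NeverGrowing.
End MutationSequence.

Theorem mainTheorem16 (Q : quiver 3) (M : nat -> 'I_3) :
  wf_quiver Q -> mutation_abundant Q -> reduced M ->
  ( ( (exists N, forall i, N <= i -> acyclic (mseq Q M i))
      /\ (exists N, forall i, N <= i ->
            is_source (mseq Q M i) (M i) \/ is_sink (mseq Q M i) (M i))
      /\ ~ (exists N, forall i, N <= i -> ~ acyclic (mseq Q M i)) )
    \/
    ( (exists N, forall i, N <= i -> ~ acyclic (mseq Q M i))
      /\ ~ (exists N, forall i, N <= i -> acyclic (mseq Q M i)) ) )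
  /\ (exists i0, forall i, i0 <= i -> cycle_preserving (mseq Q M i) (M i)).
Proof.
move=> wfQ abQ redM.
case: (classic (exists i, growing_at (mseq Q M i.+1) (M i))) => [[i G]|never].
  have cyclic := growing_forever wfQ abQ redM G.
  split; last first.
    by exists i => k ik; apply: cycle_preserving_rank3; right; apply: (cyclic k.+1); lia.
  by right; split; [exists i.+1 | apply: not_eventually_both cyclic _ => l nA].
have {}never i : ~ growing_at (mseq Q M i.+1) (M i) by move=> G; apply: never; exists i.
have [k Ack] := eventually_acyclic wfQ abQ never.
have acyclic_after := acyclic_forever wfQ abQ never Ack.
split; last first.
  by exists k => l kl; apply: cycle_preserving_rank3; left; apply: acyclic_after.
left; split; first by exists k.
split; last by apply: not_eventually_both acyclic_after _ => l A.
by exists k => l kl; apply: acyclic_mutate_source_sink wfQ never _ (acyclic_after _ kl).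
Qed.
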